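(* Let $\Pi=\{P_0,P_1,Q_1,Q_2,Q_3\}$ (five unary relation symbols) and $\mathcal{R}=\{R\}$ (one binary relation symbol). Let $\mathcal{F}$ be the class of all pointed $\mathrm{SB}(\Pi)$-models $(M,w)$ whose domain is finite. Then there exists a $(\Pi,\mathcal{R})$-automaton $A$ that halts in $\mathcal{F}$ and is strongly nonlocal in $\mathcal{F}$.
   Context: Let $\Pi$ be a finite set of unary relation symbols and $\mathcal{R}=\{R_1,\dots,R_k\}$ a finite set of binary relation symbols. A $(\Pi,\mathcal{R})$-model $M$ consists of a nonempty domain $W$ together with interpretations $P^M\subseteq W$ for $P\in\Pi$ and $R_i^M\subseteq W\times W$; a pointed model is a pair $(M,w)$ with $w\in W$. An $\mathrm{SB}(\Pi)$-model is a $(\Pi,\{R\})$-model in which $R^M$ is symmetric and irreflexive. A $(\Pi,\mathcal{R})$-automaton is a tuple $A=(Q,\mathcal{M},\pi,\delta,\mu,F,G)$ where $Q$ (states) and $\mathcal{M}$ (messages) are nonempty finite or countably infinite sets, $\pi:\mathrm{Pow}(\Pi)\to Q$, $\delta:(\mathrm{Pow}(\mathcal{M}))^k\times Q\to Q$, $\mu:Q\times\mathcal{R}\to\mathcal{M}$, $F\subseteq Q$ (accepting states) and $G\subseteq Q\setminus F$ (rejecting states). Run on a model $M$ with domain $W$, it defines configurations $f_n:W\to Q$: $f_0(w)=\pi(\{P\in\Pi: w\in P^M\})$ and $f_{n+1}(w)=\delta((N_1,\dots,N_k),f_n(w))$ where $N_i=\{\mu(f_n(v),R_i): (w,v)\in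 R_i^M\}$. $A$ accepts $(M,w)$ in round $n$ if $f_n(w)\in F$ and $f_m(w)\notin G$ for all $m<n$; $A$ rejects $(M,w)$ in round $n$ if $f_n(w)\in G$ and $f_m(w)\notin F$ for all $m<n$. $A$ accepts (rejects) $(M,w)$ if it does so in some round. For a class $\mathcal{K}$ of pointed models: $A$ converges in $\mathcal{K}$ if it accepts or rejects every $(M,w)\in\mathcal{K}$; $A$ halts in $\mathcal{K}$ if it converges in $\mathcal{K}$ and, for every $(M,w)\in\mathcal{K}$, once $f_n(w)\in F\cup G$ for the first time, $f_m(w)=f_n(w)$ for all $m\ge n$. $A$ specifies a local algorithm in $\mathcal{K}$ if there is $n\in\mathbb{N}$ such that every $(M,w)\in\mathcal{K}$ is accepted or rejected by $A$ in some round $m\le n$. $A$ is strongly nonlocal in $\mathcal{K}$ if there is no $(\Pi,\mathcal{R})$-automaton $B$ that specifies a local algorithm in $\mathcal{K}$ and accepts exactly the same pointed models in $\mathcal{K}$ as $A$. *)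

From mathcomp Require Import all_boot.
From Stdlib Require Import List.

Set Implicit Arguments.
Unset Strict Implicit.
Unset Printing Implicit Defensive.

Record model (np k : nat) (W : Type) := Model {
  mP : 'I_np -> pred W;
  mR : 'I_k -> rel W
}.

(* Q and M are countable (finite or countably infinite)
   types; they are automatically nonempty (pi and mu produce elements).
   Pow(M) is represented by M -> Prop, and (Pow M)^k by 'I_k -> (M -> Prop). *)
Record automaton (np k : nat) := Automaton {
  aQ : countType;
  aM : countType;
  api : {set 'I_np} -> aQ;
  adelta : ('I_k -> (aM -> Prop)) -> aQ -> aQ;
  amu : aQ -> 'I_k -> aM;
  aF : aQ -> Prop;
  aG : aQ -> Prop;
  aGF : forall q, aG q -> ~ aF q
}.

Arguments api {np k} _ _.
Arguments adelta {np k} _ _ _.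
Arguments amu {np k} _ _ _.
Arguments aF {np k} _ _.
Arguments aG {np k} _ _.
Arguments mP {np k W} _ _ _.
Arguments mR {np k W} _ _ _ _.

Fixpoint config np k (A : automaton np k) W (M : model np k W) (n : nat)
  : W -> aQ A :=
  match n with
  | 0 => fun w => api A [set i | mP M i w]
  | n'.+1 => fun w =>
      adelta A
        (fun i m => exists v, mR M i w v /\ amu A (config A M n' v) i = m)
        (config A M n' w)
  end.

Definition accepts_in np k (A : automaton np k) W (M : model np k W) (w : W)
  (n : nat) : Prop :=
  aF A (config A M n w) /\ forall m, m < n -> ~ aG A (config A M m w).

Definition rejects_in np k (A : automaton np k) W (M : model np k W) (w : W)
  (n : nat) : Prop :=
  aG A (config A M n w) /\ forall m, m < n -> ~ aF A (config A M m w).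

Definition accepts np k (A : automaton np k) W (M : model np k W) (w : W) :=
  exists n, accepts_in A M w n.

Definition rejects np k (A : automaton np k) W (M : model np k W) (w : W) :=
  exists n, rejects_in A M w n.

Definition mclass (np k : nat) := forall W : Type, model np k W -> W -> Prop.

Definition converges np k (A : automaton np k) (K : mclass np k) : Prop :=
  forall W (M : model np k W) (w : W), K W M w -> accepts A M w \/ rejects A M w.

Definition halts np k (A : automaton np k) (K : mclass np k) : Prop :=
  converges A K /\
  forall W (M : model np k W) (w : W), K W M w ->
    forall n, (aF A (config A M n w) \/ aG A (config A M n w)) ->
      (forall m, m < n -> ~ (aF A (config A M m w) \/ aG A (config A M m w))) ->
      forall m, n <= m -> config A M m w = config A M n w.

Definition specifies_local np k (A : automaton np k) (K : mclass np k) : Prop :=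
  exists n, forall W (M : model np k W) (w : W), K W M w ->
    exists m, m <= n /\ (accepts_in A M w m \/ rejects_in A M w m).

Definition strongly_nonlocal np k (A : automaton np k) (K : mclass np k) : Prop :=
  ~ exists B : automaton np k,
      specifies_local B K /\
      forall W (M : model np k W) (w : W), K W M w -> (accepts A M w <-> accepts B M w).

Definition SB_model np W (M : model np 1 W) : Prop :=
  (forall x y, mR M ord0 x y -> mR M ord0 y x) /\ (forall x, ~~ mR M ord0 x x).

Definition finite_type (W : Type) : Prop := exists l : list W, forall x, In x l.

Definition finite_SB_class (np : nat) : mclass np 1 :=
  fun W M w => SB_model M /\ finite_type W.
Arguments finite_SB_class np : clear implicits.

(* The automaton follows, from the start node, the "forward" walks, where an edge is
   forward when the colours Q1, Q2, Q3 of its ends advance cyclically; in round n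
   the state lists the label words of all forward walks of length n.  It rejects
   once one of these words contains a factor of period p and length 9p, and when
   there is no walk of length n it accepts iff n is even.  On a finite model a long
   enough walk revisits a node, and looping yields such a periodic factor, so the
   automaton halts.  On paths of length L, coloured cyclically and labelled by P0
   with the parity of the 2-adic valuation of the position (a sequence without
   long periodic factors), it runs for L + 1 rounds and then answers according to
   the parity of L + 1.  The paths of lengths L and L + 1 look alike from their
   first node for L rounds, so no automaton bounded by L rounds separates them. *)

From mathcomp Require Import all_boot.
From mathcomp Require Import boolp.
From mathcomp Require Import zify.
Set Implicit Arguments.
Unset Strict Implicit.
Unset Printing Implicit Defensive.

Definition val2_odd (k : nat) : bool := odd (logn 2 k).

Lemma val2_odd_double j : 0 < j -> val2_odd j.*2 = ~~ val2_odd j.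
Proof.
move=> j_gt0; rewrite /val2_odd (lognE 2 j.*2) double_gt0 j_gt0 /=.
by rewrite -muln2 dvdn_mull //= mulnK.
Qed.

Lemma val2_odd_odd k : odd k -> val2_odd k = false.
Proof. by move=> k_odd; rewrite /val2_odd lognE dvdn2 k_odd !andbF. Qed.

Lemma val2_odd_2mod4 k : k %% 4 = 2 -> val2_odd k.
Proof.
move=> k_mod4; have -> : k = (k %/ 2).*2 by rewrite -muln2; lia.
by rewrite val2_odd_double ?val2_odd_odd //; lia.
Qed.

(* A period [p] on [8 p] consecutive positions would, for odd [p], be broken at
   the position that is [2] modulo [4]; for even [p] it halves to a period [p / 2]
   of the sequence read at the even positions. *)
Lemma val2_odd_aperiodic p s : 0 < p -> 0 < s ->
  ~ (forall t, t < 8 * p -> val2_odd (s + t) = val2_odd (s + t + p)).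
Proof.
elim/ltn_ind: p s => p IH s p_gt0 s_gt0 per.
case/boolP: (odd p) => p_odd.
  pose t := (6 - s %% 4) %% 4.
  have := per t (ltac:(rewrite /t; lia)).
  rewrite val2_odd_2mod4; last by rewrite /t; lia.
  rewrite val2_odd_odd // oddD p_odd /=.
  have : (s + t) %% 4 = 2 by rewrite /t; lia.
  by lia.
have [q p_eq] : exists q, p = q.*2 by exists (p %/ 2); lia.
subst p.
apply: (IH q _ (s.+1 %/ 2)); [lia | lia | lia |] => t t_lt.
have := per ((s.+1 %/ 2 + t).*2 - s) (ltac:(rewrite -muln2; lia)).
rewrite subnKC; last by rewrite -muln2; lia.
by rewrite -doubleD !val2_odd_double; [move/negb_inj|lia|lia].
Qed.

Notation letter := {set 'I_5}.
Definition word := seq letter.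

Fixpoint words_of_size (n : nat) : seq word :=
  if n is n'.+1 then [seq a :: y | a <- enum {: letter}, y <- words_of_size n']
  else [:: [::]].

Arguments words_of_size : simpl never.

Lemma mem_words_of_size n y : (y \in words_of_size n) = (size y == n).
Proof.
elim: n y => [|n IH] [|a y] //=.
- by apply/negbTE/negP => /allpairsP [[b z]] [].
- rewrite eqSS -IH; apply/allpairsP/idP.
  + by case=> [[b z]] /= [_ z_in [_ ->]].
  + by move=> y_in; exists (a, y); rewrite mem_enum.
Qed.

(* The constant [9] leaves the [8 p] positions needed by [val2_odd_aperiodic]. *)
Definition periodic_factor (y : word) : bool :=
  has (fun p => has (fun i => has (fun l => (9 * p <= l) && (i + l <= size y) &&
     all (fun t => nth set0 y (i + t) == nth set0 y (i + t + p)) (iota 0 (l - p)))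
     (iota 0 (size y).+1)) (iota 0 (size y).+1)) (iota 1 (size y)).

Lemma periodic_factorP y : reflect
  (exists p i l, [/\ 0 < p, 9 * p <= l, i + l <= size y &
     forall t, t < l - p -> nth set0 y (i + t) = nth set0 y (i + t + p)])
  (periodic_factor y).
Proof.
apply: (iffP idP).
- case/hasP => p; rewrite mem_iota => /andP [p_gt0 _].
  case/hasP => i _; case/hasP => l _ /andP [/andP [l_ge il_le] /allP per].
  by exists p, i, l; split => // t t_lt; apply/eqP/per; rewrite mem_iota.
- case=> p [i [l [p_gt0 l_ge il_le per]]].
  apply/hasP; exists p; first by rewrite mem_iota; lia.
  apply/hasP; exists i; first by rewrite mem_iota; lia.
  apply/hasP; exists l; first by rewrite mem_iota; lia.
  rewrite l_ge il_le; apply/allP => t; rewrite mem_iota => t_lt.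
  by apply/eqP/per; lia.
Qed.

Lemma periodic_factor_cons a y : periodic_factor y -> periodic_factor (a :: y).
Proof.
case/periodic_factorP => p [i [l [p_gt0 l_ge il_le per]]].
by apply/periodic_factorP; exists p, i.+1, l; split.
Qed.

Definition P0 : 'I_5 := @Ordinal 5 0 isT.
Definition Q1 : 'I_5 := @Ordinal 5 2 isT.
Definition Q2 : 'I_5 := @Ordinal 5 3 isT.
Definition Q3 : 'I_5 := @Ordinal 5 4 isT.

(* Colour [3] means "uncoloured". *)
Definition colour (a : letter) : nat :=
  if Q1 \in a then 0 else if Q2 \in a then 1 else if Q3 \in a then 2 else 3.

Definition forward_letter (a b : letter) : bool :=
  (colour a < 3) && (colour b == (colour a).+1 %% 3).

(* Status [0] is "running", [1] "accept", [2] "reject"; [n] is the length of the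
   forward walks collected in [S]. *)
Definition verdict (n : nat) (S : seq word) : nat :=
  if has periodic_factor S then 2 else if nilp S then (if odd n then 2 else 1) else 0.

Definition state : countType := Countable.clone (letter * nat * nat * seq word)%type _.

Definition st_label (q : state) : letter := q.1.1.1.
Definition st_status (q : state) : nat := q.1.1.2.
Definition st_round (q : state) : nat := q.1.2.
Definition st_walks (q : state) : seq word := q.2.

Definition init_state (a : letter) : state := (a, 0, 0, [:: [:: a]]).

Definition step_state (N : 'I_1 -> state -> Prop) (q : state) : state :=
  if st_status q != 0 then q else
  let S := [seq y <- words_of_size (st_round q).+2 |
            `[< exists q' y', [/\ N ord0 q', forward_letter (st_label q) (st_label q'),
                                  y' \in st_walks q' & y = st_label q :: y'] >]] in
  (st_label q, verdict (st_round q).+1 S, (st_round q).+1, S).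

Definition accepting (q : state) : Prop := st_status q = 1.
Definition rejecting (q : state) : Prop := 1 < st_status q.

Lemma rejecting_not_accepting q : rejecting q -> ~ accepting q.
Proof. by rewrite /rejecting /accepting => + q_acc; rewrite q_acc. Qed.

Definition walk_automaton : automaton 5 1 :=
  @Automaton 5 1 state state init_state step_state (fun q _ => q)
    accepting rejecting rejecting_not_accepting.

Section Walks.

Variables (W : Type) (M : model 5 1 W).

Definition label_of (v : W) : letter := [set i | mP M i v].

Definition forward_edge : rel W :=
  fun a b => mR M ord0 a b && forward_letter (label_of a) (label_of b).

Definition walk_word (n : nat) (v : W) (y : word) : Prop :=
  exists s : seq W,
    [/\ size s = n, path forward_edge v s & y = map label_of (v :: s)].

Lemma walk_word_size n v y : walk_word n v y -> size y = n.+1.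
Proof. by case=> s [<- _ ->]; rewrite /= size_map. Qed.

Lemma walk_word0 v y : walk_word 0 v y <-> y = [:: label_of v].
Proof.
split=> [[s [s_size _ ->]] | ->]; last by exists [::].
by case: s s_size.
Qed.

Lemma walk_wordS n v y : walk_word n.+1 v y <->
  exists u y', [/\ forward_edge v u, walk_word n u y' & y = label_of v :: y'].
Proof.
split.
- case=> [[|u s]] [//= [s_size] /andP [vu us] ->].
  by exists u, (map label_of (u :: s)); split => //; exists s.
- case=> u [y' [vu [s [s_size us ->]] ->]].
  by exists (u :: s); rewrite /= vu us s_size.
Qed.

Lemma walk_word_take n t v y : walk_word n v y -> t <= n -> exists z, walk_word t v z.
Proof.
case=> s [s_size vs _] t_le; exists (map label_of (v :: take t s)), (take t s).
by rewrite size_takel ?s_size // take_path.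
Qed.

End Walks.

Notation cfg M n v := (config walk_automaton M n v).

Section Configurations.

Variables (W : Type) (M : model 5 1 W).

Lemma config_label n v : st_label (cfg M n v) = label_of M v.
Proof. by elim: n => [|n IH] //=; rewrite /step_state; case: ifP. Qed.

Lemma config_halted n m v : st_status (cfg M n v) != 0 -> n <= m ->
  cfg M m v = cfg M n v.
Proof.
move=> halted; elim: m => [|m IH]; first by rewrite leqn0 => /eqP ->.
rewrite leq_eqVlt => /orP [/eqP <- // | n_le].
by rewrite /= /step_state IH // halted.
Qed.

Lemma config_running_step n v : st_status (cfg M n v) = 0 ->
  [/\ st_status (cfg M n.+1 v) = verdict (st_round (cfg M n v)).+1 (st_walks (cfg M n.+1 v)),
      st_round (cfg M n.+1 v) = (st_round (cfg M n v)).+1 &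
   forall y, y \in st_walks (cfg M n.+1 v) <->
     size y = (st_round (cfg M n v)).+2 /\
     exists u y', [/\ forward_edge M v u, y' \in st_walks (cfg M n u) & y = label_of M v :: y']].
Proof.
move=> running_n; rewrite /= /step_state running_n eqxx /=; split => // y.
rewrite mem_filter mem_words_of_size; split.
- case/andP => /asboolP [q [y' [[u [vu <-]] fwd y'_in ->]]] /eqP y_size.
  split => //; exists u, y'; rewrite config_label; split => //.
  by rewrite /forward_edge vu -(config_label n v) -(config_label n u).
- case=> y_size [u [y' [/andP [vu fwd] y'_in y_eq]]].
  rewrite y_size eqxx andbT; apply/asboolP.
  by exists (cfg M n u), y'; rewrite y_eq !config_label; split; first exists u.
Qed.

Definition running n v := forall m, m < n -> st_status (cfg M m v) = 0.

Lemma running_le n m v : running n v -> m <= n -> running m v.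
Proof. by move=> v_running m_le k k_lt; apply/v_running/(leq_trans k_lt). Qed.

Lemma running_or_first_halt n v : running n v \/
  exists t, [/\ t < n, running t v & st_status (cfg M t v) != 0].
Proof.
case: (boolP [exists m : 'I_n, st_status (cfg M m v) != 0]) => [|none]; last first.
  by left=> m m_lt; apply/eqP; move/existsPn: none => /(_ (Ordinal m_lt)) /negPn.
case/existsP => m0 m0_halted; right.
have ex_halt : exists m, (m < n) && (st_status (cfg M m v) != 0).
  by exists m0; rewrite ltn_ord.
case: (ex_minnP ex_halt) => t /andP [t_lt t_halted] t_min.
exists t; split => // m m_lt; apply/eqP/negP => /negP m_halted.
by have := t_min m; rewrite (ltn_trans m_lt t_lt) m_halted; lia.
Qed.

Definition records_walks n v :=
  st_round (cfg M n v) = n /\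
  forall y, y \in st_walks (cfg M n v) <-> walk_word M n v y.

Section RecordsWalksStep.

Variable n : nat.
Hypothesis IH : forall m w, m <= n -> running m w -> records_walks m w.

(* A forward neighbour [u] cannot halt before [v] with walks still in hand: its
   walks all had a periodic factor, and [v] would have seen one a round later. *)
Lemma neighbour_halts_without_walks v u t :
  running n.+1 v -> forward_edge M v u -> t < n -> running t u ->
  st_status (cfg M t u) != 0 -> st_walks (cfg M t u) = [::].
Proof.
case: t => [//|t] v_running vu t_lt u_running.
have [u_status _ _] := config_running_step (u_running t (ltnSn t)).
have [_ u_walks] := IH (ltnW t_lt) u_running.
rewrite u_status /verdict; case: ifP => [/hasP [z z_in z_per] _ | _]; last first.
  by case: ifP => // /nilP.
have [_ v_walks] := IH t_lt (running_le v_running (leqW t_lt)).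
have [v_status _ _] := config_running_step (v_running t.+1 (ltnW t_lt)).
have := v_running t.+2 t_lt; rewrite v_status /verdict.
suff -> : has periodic_factor (st_walks (cfg M t.+2 v)) by [].
apply/hasP; exists (label_of M v :: z); last exact: periodic_factor_cons.
by apply/v_walks/walk_wordS; exists u, z; split => //; apply/u_walks.
Qed.

Lemma neighbour_records_walks v u : running n.+1 v -> forward_edge M v u ->
  forall y, y \in st_walks (cfg M n u) <-> walk_word M n u y.
Proof.
move=> v_running vu; case: (running_or_first_halt n u) => [|[t [t_lt u_running halted]]].
  by move=> u_running; have [] := IH (leqnn n) u_running.
have no_walks := neighbour_halts_without_walks v_running vu t_lt u_running halted.
rewrite (config_halted halted (ltnW t_lt)) no_walks => y; split => // y_walk.
have [z z_walk] := walk_word_take y_walk (ltnW t_lt).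
by have [_ /(_ z) /iffRL] := IH (ltnW t_lt) u_running; rewrite no_walks; apply.
Qed.

End RecordsWalksStep.

Lemma running_records_walks n v : running n v -> records_walks n v.
Proof.
elim/ltn_ind: n v => -[_ v _ | n IH v v_running].
  by split=> // y; rewrite walk_word0 inE; split => [/eqP | ->].
have IH' m w : m <= n -> running m w -> records_walks m w by move=> ?; apply: IH.
have [v_round _] := IH' n v (leqnn n) (running_le v_running (leqnSn n)).
have [_ round_step walks_step] := config_running_step (v_running n (ltnSn n)).
split=> [|y]; first by rewrite round_step v_round.
rewrite walks_step v_round walk_wordS; split.
- case=> _ [u [y' [vu y'_in ->]]]; exists u, y'; split => //.
  exact/(neighbour_records_walks IH' v_running vu).
- case=> u [y' [vu y'_walk ->]]; split; first by rewrite /= (walk_word_size y'_walk).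
  by exists u, y'; split => //; apply/(neighbour_records_walks IH' v_running vu).
Qed.

Lemma running_status n v : running n.+1 v ->
  st_status (cfg M n.+1 v) = verdict n.+1 (st_walks (cfg M n.+1 v)).
Proof.
move=> v_running; have [v_round _] := running_records_walks (running_le v_running (leqnSn n)).
by have [-> _ _] := config_running_step (v_running n (ltnSn n)); rewrite v_round.
Qed.

Lemma running_walks n v : running n.+2 v ->
  (exists y, walk_word M n.+1 v y) /\
  forall y, walk_word M n.+1 v y -> ~~ periodic_factor y.
Proof.
move=> v_running; have v_running' := running_le v_running (leqnSn n.+1).
have [_ v_walks] := running_records_walks v_running'.
have := v_running n.+1 (ltnSn n.+1); rewrite running_status // /verdict.
case: ifP => // /negbT /hasPn no_per.
case Ev: (st_walks (cfg M n.+1 v)) => [|y S] /=; first by case: odd.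
move=> _; split; first by exists y; apply/v_walks; rewrite Ev mem_head.
by move=> z /v_walks; apply: no_per.
Qed.

End Configurations.

Lemma finite_type_repeat (W : Type) : finite_type W ->
  exists N, forall x : nat -> W, exists i j, [/\ i < j, j <= N & x i = x j].
Proof.
case=> l l_full; pose N := List.length l; exists N => x.
have index_of w : {k | k < N & List.nth k l w = w}.
  apply: cid2; have [k [k_lt k_nth]] := List.In_nth l w w (l_full w).
  by exists k => //; apply/ltP.
pose ix k := sval (index_of (x k)).
have ix_lt k : ix k < N by rewrite /ix; case: (index_of (x k)).
have ix_inj k1 k2 : ix k1 = ix k2 -> x k1 = x k2.
  rewrite /ix; case: (index_of (x k1)) => a a_lt xa.
  case: (index_of (x k2)) => b b_lt xb /= ab.
  by rewrite -xa -xb ab; apply/List.nth_indep/ltP.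
have : ~~ uniq (map ix (iota 0 N.+1)).
  apply/negP => /uniq_leq_size le_size.
  have : {subset map ix (iota 0 N.+1) <= iota 0 N}.
    by move=> k /mapP [m _ ->]; rewrite mem_iota ix_lt.
  by move/le_size; rewrite size_map !size_iota ltnn.
case/(uniqPn 0) => i [j [ij]]; rewrite size_map size_iota => j_lt.
have i_lt := ltn_trans ij j_lt.
by rewrite !(nth_map 0) ?size_iota ?nth_iota // => /ix_inj; exists i, j.
Qed.

Definition pump (i j y : nat) := if y.+1 == j then i else y.+1.

(* A path [x 0 -> ... -> x j] with [x i = x j] is unrolled into an infinite path
   [x (iter k (pump i j) 0)] that is periodic with period [j - i] after [i]. *)
Lemma lasso_path (T : Type) (e : rel T) (x : nat -> T) i j : i < j ->
  (forall k, k < j -> e (x k) (x k.+1)) -> x i = x j ->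
  exists F : nat -> T, [/\ F 0 = x 0, forall k, e (F k) (F k.+1) &
                           forall t, F (i + t + (j - i)) = F (i + t)].
Proof.
move=> ij x_path xij; pose g k := iter k (pump i j) 0.
have gS k : g k.+1 = pump i j (g k) by [].
have g_lt k : g k < j.
  elim: k => [|k IH]; [rewrite /g /=; lia | rewrite gS /pump; case: eqP; lia].
have g_le k : k <= i -> g k = k.
  by elim: k => [//|k IH] k_le; rewrite gS IH /pump; [case: eqP|]; lia.
have g_pre t : t < j - i -> g (i + t) = i + t.
  elim: t => [|t IH] t_lt; first by rewrite addn0 g_le.
  by rewrite addnS gS IH /pump; [case: eqP|]; lia.
have g_per t : g (i + t + (j - i)) = g (i + t).
  elim: t => [|t IH].
    have -> : i + 0 + (j - i) = (i + (j - i).-1).+1 by lia.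
    rewrite gS g_pre /pump ?addn0 ?g_le //; last by lia.
    by case: eqP; lia.
  by rewrite addnS addSn !gS IH.
exists (x \o g); split=> [//|k|t]; last by rewrite /= g_per.
rewrite /= /pump.
by case: eqP => [gk_j|_]; [rewrite xij -gk_j|]; apply: x_path; have := g_lt k; lia.
Qed.

Lemma path_map_iota (T : Type) (e : rel T) (F : nat -> T) a m :
  (forall k, a <= k < a + m -> e (F k) (F k.+1)) ->
  path e (F a) (map F (iota a.+1 m)).
Proof.
elim: m a => [//|m IH] a F_path /=.
rewrite F_path ?IH //; last by lia.
by move=> k /andP [k_gt k_lt]; apply: F_path; lia.
Qed.

Lemma walk_word_iota (W : Type) (M : model 5 1 W) (F : nat -> W) n :
  (forall k, k < n -> forward_edge M (F k) (F k.+1)) ->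
  walk_word M n (F 0) [seq label_of M (F k) | k <- iota 0 n.+1].
Proof.
move=> F_path; exists (map F (iota 1 n)); split.
- by rewrite size_map size_iota.
- by apply: path_map_iota => k /andP [_ k_lt]; apply: F_path.
- by rewrite /= -map_comp.
Qed.

Lemma periodic_factor_iota (f : nat -> letter) i c : 0 < c ->
  (forall t, f (i + t + c) = f (i + t)) ->
  periodic_factor [seq f k | k <- iota 0 (i + 9 * c).+1].
Proof.
move=> c_gt0 f_per; apply/periodic_factorP; exists c, i, (9 * c).
rewrite size_map size_iota; split=> [//|//|//|t t_lt].
by rewrite !(nth_map 0) ?size_iota ?nth_iota ?f_per //; lia.
Qed.

Lemma finite_halts (W : Type) (M : model 5 1 W) v : finite_type W ->
  exists n, st_status (cfg M n v) != 0.
Proof.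
move=> /finite_type_repeat [N repeat].
case: (pselect (exists n, st_status (cfg M n v) != 0)) => // never_halts.
have v_running n : running M n v.
  by move=> m _; apply/eqP/negPn/negP => halted; apply: never_halts; exists m.
have [[_ [s [s_size s_path _]]] _] := running_walks (v_running N.+2).
pose x k := nth v (v :: s) k.
have [i [j [ij j_le xij]]] := repeat x.
have x_path k : k < j -> forward_edge M (x k) (x k.+1).
  by move=> k_lt; apply/(pathP v s_path); rewrite s_size; lia.
have [F [F0 F_path F_per]] := lasso_path ij x_path xij.
pose L := i + 9 * (j - i); have L_eq : L = L.-1.+1 by rewrite /L; lia.
have [_ no_per] := running_walks (v_running L.-1.+2).
have word_walk := walk_word_iota (n := L) (fun k _ => F_path k).
rewrite F0 {1 2}L_eq in word_walk; have := no_per _ word_walk; rewrite -L_eq.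
by rewrite (periodic_factor_iota (f := label_of M \o F)) //= => [|t]; [lia | rewrite F_per].
Qed.

Section AutomatonFacts.

Variables (np k : nat) (B : automaton np k).

Lemma halts_of_absorbing (K : mclass np k) :
  (forall N q, aF B q \/ aG B q -> adelta B N q = q) ->
  (forall W (M : model np k W) w, K W M w ->
     exists n, aF B (config B M n w) \/ aG B (config B M n w)) ->
  halts B K.
Proof.
move=> absorbing eventually; split=> [W M w Kw | W M w _ n stop_n _ m].
  have stops' : exists n, `[< aF B (config B M n w) \/ aG B (config B M n w) >].
    by have [n ?] := eventually W M w Kw; exists n; apply/asboolP.
  case: (ex_minnP stops') => n /asboolP stop_n n_min.
  have before m : m < n -> ~ (aF B (config B M m w) \/ aG B (config B M m w)).
    by move=> m_lt /asboolP /n_min; rewrite leqNgt m_lt.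
  by case: stop_n => [F_n | G_n]; [left | right]; exists n; split=> // m m_lt ?;
     apply: (before m m_lt); [right | left].
elim: m => [|m IH]; first by rewrite leqn0 => /eqP ->.
by rewrite leq_eqVlt => /orP [/eqP <- // | /IH /= ->]; apply: absorbing.
Qed.

Lemma rejects_in_not_accepts W (M : model np k W) w n :
  rejects_in B M w n -> ~ accepts B M w.
Proof.
case=> G_n not_F [m [F_m not_G]].
case: (ltngtP m n) => [m_lt | n_lt | m_n]; [exact: not_F F_m | exact: not_G G_n |].
by rewrite m_n in F_m; apply: aGF G_n F_m.
Qed.

Lemma verdict_in_transfer W1 W2 (M1 : model np k W1) (M2 : model np k W2) w1 w2 m :
  (forall r, r <= m -> config B M1 r w1 = config B M2 r w2) ->
  (accepts_in B M1 w1 m -> accepts_in B M2 w2 m) /\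
  (rejects_in B M1 w1 m -> rejects_in B M2 w2 m).
Proof.
move=> agree; split=> -[stop_m before]; split; rewrite -?agree //.
all: by move=> r r_lt; rewrite -agree; [apply: before | apply: ltnW].
Qed.

End AutomatonFacts.

Lemma strongly_nonlocal_of_indistinguishable np k (A : automaton np k)
    (K : mclass np k) :
  (forall n, exists W1 W2 (M1 : model np k W1) (M2 : model np k W2) w1 w2,
     [/\ K W1 M1 w1, K W2 M2 w2,
         forall (B : automaton np k) r, r <= n -> config B M1 r w1 = config B M2 r w2 &
         ~ (accepts A M1 w1 <-> accepts A M2 w2)]) ->
  strongly_nonlocal A K.
Proof.
move=> pairs [B [[n B_local] B_acc]].
have [W1 [W2 [M1 [M2 [w1 [w2 [K1 K2 agree differ]]]]]]] := pairs n.
apply: differ; rewrite (B_acc _ _ _ K1) (B_acc _ _ _ K2).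
have [m [m_le verdict_m]] := B_local _ M1 w1 K1.
have [acc_transfer rej_transfer] :=
  verdict_in_transfer (fun r r_le => agree B r (leq_trans r_le m_le)).
case: verdict_m => [acc | rej]; first by split=> _; exists m; [apply: acc_transfer|].
have rej' := rej_transfer rej.
by split=> acc; [case: (rejects_in_not_accepts rej acc) | case: (rejects_in_not_accepts rej' acc)].
Qed.

Lemma walk_automaton_halts : halts walk_automaton (finite_SB_class 5).
Proof.
apply: halts_of_absorbing => [N q|W M w [_ W_finite]].
  by rewrite /= /step_state /accepting /rejecting; case: (st_status q) => [[]|].
have [n halted] := finite_halts M w W_finite.
exists n; rewrite /= /accepting /rejecting.
by move: halted; case: (st_status _) => [|[|]]; auto.
Qed.

Definition colour_index (k : nat) : 'I_5 :=
  match k %% 3 with 0 => Q1 | 1 => Q2 | _ => Q3 end.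

(* Positions are shifted by one because [val2_odd_aperiodic] needs [0 < s]. *)
Definition path_label (k : nat) : letter :=
  [set i | (i == colour_index k) || (i == P0) && val2_odd k.+1].

Definition path_model (L : nat) : model 5 1 'I_L.+1 :=
  Model (fun i (k : 'I_L.+1) => i \in path_label k)
        (fun _ (a b : 'I_L.+1) => (a.+1 == b :> nat) || (b.+1 == a :> nat)).

Lemma path_model_finite_SB L w : finite_SB_class 5 _ (path_model L) w.
Proof.
split; first by split=> [x y | x] /=; rewrite 1?orbC // !(gtn_eqF (ltnSn _)).
exists (enum 'I_L.+1) => x; have : x \in enum 'I_L.+1 by rewrite mem_enum.
by elim: (enum _) => //= a s IH; rewrite inE => /orP [/eqP ->|]; auto.
Qed.

Lemma label_of_path_model L (a : 'I_L.+1) : label_of (path_model L) a = path_label a.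
Proof. by apply/setP => i; rewrite inE. Qed.

Lemma colour_path_label k : colour (path_label k) = k %% 3.
Proof.
rewrite /colour /path_label /colour_index !inE.
have : k %% 3 < 3 by rewrite ltn_mod.
by case: (k %% 3) => [|[|[|]]].
Qed.

Lemma P0_in_path_label k : (P0 \in path_label k) = val2_odd k.+1.
Proof.
rewrite /path_label /colour_index inE.
have : k %% 3 < 3 by rewrite ltn_mod.
by case: (k %% 3) => [|[|[|]]].
Qed.

Lemma forward_edge_path_model L (a b : 'I_L.+1) :
  forward_edge (path_model L) a b = (b == a.+1 :> nat).
Proof.
rewrite /forward_edge /forward_letter !label_of_path_model !colour_path_label /=.
apply/idP/eqP => [/andP [/orP [/eqP <- // | /eqP ab] /andP [_ /eqP]] | ->]; first lia.
by rewrite eqxx /=; apply/andP; split; [lia | apply/eqP; lia].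
Qed.

Lemma path_model_path L (a : 'I_L.+1) s : path (forward_edge (path_model L)) a s ->
  forall t, t < size s -> val (nth a s t) = a + t.+1.
Proof.
elim: s a => [//|b s IH] a /= /andP [+ b_path] [|t] t_lt /=;
  rewrite forward_edge_path_model => /eqP ab; first lia.
by rewrite (set_nth_default b) ?IH //; lia.
Qed.

Lemma walk_word_path_model_P0 L n y : walk_word (path_model L) n ord0 y ->
  forall k, k <= n -> (P0 \in nth set0 y k) = val2_odd k.+1.
Proof.
case=> s [s_size s_path ->] [|k] k_le; rewrite (nth_map ord0) /=; try lia.
  by rewrite label_of_path_model P0_in_path_label.
by rewrite label_of_path_model P0_in_path_label (path_model_path s_path) //; lia.
Qed.

Lemma walk_word_path_model_aperiodic L n y :
  walk_word (path_model L) n ord0 y -> ~~ periodic_factor y.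
Proof.
move=> y_walk; apply/periodic_factorP => -[p [i [l [p_gt0 l_ge il_le per]]]].
have y_size := walk_word_size y_walk.
apply: (val2_odd_aperiodic (s := i.+1) p_gt0) => // t t_lt.
have := per t (ltac:(lia)).
rewrite !addSn -(walk_word_path_model_P0 y_walk (k := i + t)); last lia.
by rewrite -(walk_word_path_model_P0 y_walk (k := i + t + p)); [move=> -> | lia].
Qed.

Lemma walk_word_path_model_exists L n : n <= L ->
  exists y, walk_word (path_model L) n ord0 y.
Proof.
move=> n_le; pose F k : 'I_L.+1 := inord k.
have F0 : F 0 = ord0 by apply: val_inj; rewrite /= inordK.
rewrite -F0; eexists; apply: walk_word_iota => k k_lt.
by rewrite forward_edge_path_model /F !inordK //; lia.
Qed.

Lemma walk_word_path_model_none L y : ~ walk_word (path_model L) L.+1 ord0 y.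
Proof.
case=> s [s_size s_path _].
have /= := path_model_path s_path (t := L) (ltac:(lia)).
by have := ltn_ord (nth ord0 s L); lia.
Qed.

Lemma path_model_running L n : n <= L.+1 -> running (path_model L) n ord0.
Proof.
elim: n => [_ m //|n IH] n_le; have running_n := IH (ltnW n_le).
move=> m; rewrite ltnS leq_eqVlt => /orP [/eqP -> | m_lt]; last exact: running_n m_lt.
case: n n_le IH running_n => [//|n] n_le _ running_n.
have [_ walks] := running_records_walks running_n.
rewrite running_status // /verdict.
have [y y_walk] := walk_word_path_model_exists (ltac:(lia) : n.+1 <= L).
have -> : has periodic_factor (st_walks (cfg (path_model L) n.+1 ord0)) = false.
  by apply/hasP => -[z /walks /walk_word_path_model_aperiodic /negP].
by move/walks: y_walk; case: (st_walks _).
Qed.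

Lemma path_model_status L :
  st_status (cfg (path_model L) L.+1 ord0) = if odd L.+1 then 2 else 1.
Proof.
have running_L := path_model_running (leqnn L.+1).
have [_ walks] := running_records_walks running_L.
rewrite running_status //.
case Ew: (st_walks _) => [//|y S].
by have /walks/walk_word_path_model_none : y \in st_walks (cfg (path_model L) L.+1 ord0)
  by rewrite Ew mem_head.
Qed.

Lemma accepts_path_model L : accepts walk_automaton (path_model L) ord0 <-> ~~ odd L.+1.
Proof.
have running_L := path_model_running (leqnn L.+1).
case: ifP (path_model_status L) => [L_odd | L_even] status_L; rewrite ?L_odd ?L_even.
  split=> // acc; case: (rejects_in_not_accepts (n := L.+1) _ acc).
  split=> [|m m_lt]; first by rewrite /= /rejecting status_L.
  by rewrite /= /accepting running_L.
split=> // _; exists L.+1; split=> [|m m_lt]; first by rewrite /= /accepting status_L.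
by rewrite /= /rejecting running_L.
Qed.

Lemma config_path_model_succ (B : automaton 5 1) L m (a : 'I_L.+1) (b : 'I_L.+2) :
  a = b :> nat -> a + m <= L ->
  config B (path_model L) m a = config B (path_model L.+1) m b.
Proof.
elim: m a b => [|m IH] a b ab am_le /=; first by rewrite ab.
rewrite (IH a b) //; last lia.
congr (adelta B _ _); apply: funext => i; apply: funext => q; apply: propext.
split=> -[v [av <-]].
- have v_lt : v < L.+2 := leqW (ltn_ord v).
  exists (Ordinal v_lt); split; first by move: av; rewrite /= ab.
  by rewrite (IH v (Ordinal v_lt)) //=; move: av => /= /orP [/eqP|/eqP]; lia.
- have v_lt : v < L.+1 by move: av => /= /orP [/eqP|/eqP]; lia.
  exists (Ordinal v_lt); split; first by move: av; rewrite /= ab.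
  by rewrite (IH (Ordinal v_lt) v) //=; move: av => /= /orP [/eqP|/eqP]; lia.
Qed.

Theorem theorem3p1 :
  exists A : automaton 5 1,
    halts A (finite_SB_class 5) /\ strongly_nonlocal A (finite_SB_class 5).
Proof.
exists walk_automaton; split; first exact: walk_automaton_halts.
apply: strongly_nonlocal_of_indistinguishable => L.
exists 'I_L.+1, 'I_L.+2, (path_model L), (path_model L.+1), ord0, ord0.
split; [exact: path_model_finite_SB | exact: path_model_finite_SB | |].
  by move=> B r r_le; apply: config_path_model_succ.
rewrite !accepts_path_model /= negbK.
by case: (odd L) => -[to from]; [move: (to isT) | move: (from isT)].
Qed.
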